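(* Let $V(1),\dots,V(T)\in\mathbb R^p$ and $0=\nu_0<\nu_1<\dots<\nu_M=T$ be such that $V(\nu_m+1)=\dots=V(\nu_{m+1})$ for all $m=0,\dots,M-1$. Let $\Delta$ be a positive integer and suppose $\nu=\nu_m$ for some $1\le m\le M-1$ satisfies $|\nu_m-\nu_{m'}|\ge\Delta$ for all $m'\ne m$. With \[ \widetilde V(t)=\sqrt{\frac{T-t}{Tt}}\sum_{r=1}^tV(r)-\sqrt{\frac{t}{T(T-t)}}\sum_{r=t+1}^TV(r),\qquad t\in\{1,\dots,T-1\}, \] it holds that \[ \max_{1\le t\le T-1}\|\widetilde V(t)\|^2\ \ge\ \frac{\|V(\nu)-V(\nu+1)\|^2\Delta^2}{48T}. \]
   Context: $\|\cdot\|$ is the Euclidean norm. *)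

From HB Require Import structures.
From mathcomp Require Import all_boot all_order all_algebra.
From mathcomp Require Import reals.
Set Implicit Arguments. Unset Strict Implicit. Unset Printing Implicit Defensive.
Import Order.TTheory GRing.Theory Num.Theory.
Local Open Scope ring_scope.

Definition sqnorm (R : realType) (p : nat) (v : 'rV[R]_p) : R :=
  \sum_(i < p) (v 0 i) ^+ 2.

Definition Vtilde (R : realType) (p T : nat) (V : nat -> 'rV[R]_p) (t : nat)
  : 'rV[R]_p :=
  Num.sqrt ((T%:R - t%:R) / (T%:R * t%:R)) *: (\sum_(1 <= r < t.+1) V r)
  - Num.sqrt (t%:R / (T%:R * (T%:R - t%:R))) *: (\sum_(t.+1 <= r < T.+1) V r).

From HB Require Import structures.
From mathcomp Require Import all_boot all_order all_algebra.
From mathcomp Require Import reals.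
From mathcomp Require Import ring lra zify.
Set Implicit Arguments. Unset Strict Implicit. Unset Printing Implicit Defensive.
Import Order.TTheory GRing.Theory Num.Theory.
Local Open Scope ring_scope.

(* Write S for the partial sums of V and C(t) = S(t) - (t/T) S(T) for the
   centred partial sums.  Then Vtilde(t) = sqrt(T/(t(T-t))) C(t), and since
   t(T-t) <= T^2/4 and C(0) = C(T) = 0, every ||C(t)||^2 is at most T/4 times
   the maximum of ||Vtilde||^2.  As V is constant on (nu-Delta, nu] and on
   (nu, nu+Delta], the second difference 2C(nu) - C(nu-Delta) - C(nu+Delta)
   equals Delta (V(nu) - V(nu+1)); bounding it by the parallelogram inequality
   gives Delta^2 ||V(nu) - V(nu+1)||^2 <= 4T max ||Vtilde||^2, which is twelve
   times stronger than the claim. *)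

Lemma leq_incr_last (f : nat -> nat) (M k : nat) :
  (forall i, (i < M)%N -> (f i < f i.+1)%N) -> (k <= M)%N -> (f k <= f M)%N.
Proof.
elim: M => [|M IH] incf; first by rewrite leqn0 => /eqP->.
rewrite leq_eqVlt => /orP[/eqP-> // | kM].
apply: leq_trans (ltnW (incf M _)) => //.
by apply: IH kM => i iM; apply/incf/leqW.
Qed.

Lemma leq_dist_subn (R : realDomainType) (i j d : nat) :
  (i <= j)%N -> d%:R <= `|j%:R - i%:R| :> R -> (d <= j - i)%N.
Proof. by move=> ij; rewrite -natrB // normr_nat ler_nat. Qed.

Lemma sqrtr_mul_sqr (R : rcfType) (a c : R) :
  0 <= a -> 0 <= c -> Num.sqrt (a * c ^+ 2) = Num.sqrt a * c.
Proof. by move=> a0 c0; rewrite sqrtrM // sqrtr_sqr ger0_norm. Qed.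

Section SquaredNorm.
Variables (R : realType) (p : nat).
Implicit Types (v w : 'rV[R]_p).

Lemma sqnorm0 : sqnorm (0 : 'rV[R]_p) = 0.
Proof. by rewrite /sqnorm big1 // => i _; rewrite mxE expr0n. Qed.

Lemma sqnormZ (a : R) v : sqnorm (a *: v) = a ^+ 2 * sqnorm v.
Proof. by rewrite /sqnorm mulr_sumr; apply: eq_bigr => i _; rewrite mxE exprMn. Qed.

Lemma sqnormD_le v w : sqnorm (v + w) <= 2 * (sqnorm v + sqnorm w).
Proof.
rewrite /sqnorm -big_split mulr_sumr; apply: ler_sum => i _; rewrite /= !mxE.
rewrite -subr_ge0 (_ : _ - _ = (v 0 i - w 0 i) ^+ 2) ?sqr_ge0 //=; ring.
Qed.

Lemma sqnormN v : sqnorm (- v) = sqnorm v.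
Proof. by rewrite -scaleN1r sqnormZ sqrrN expr1n mul1r. Qed.

Lemma sqnormB_le v w : sqnorm (v - w) <= 2 * (sqnorm v + sqnorm w).
Proof. by rewrite -(sqnormN w) sqnormD_le. Qed.

End SquaredNorm.

Section CenteredPartialSums.
Variables (R : realType) (p T : nat) (V : nat -> 'rV[R]_p).

Definition partial_sum t := \sum_(1 <= r < t.+1) V r.

Definition cusum t := partial_sum t - (t%:R / T%:R) *: partial_sum T.

Lemma partial_sum_const a k w : (forall r, (a < r <= a + k)%N -> V r = w) ->
  partial_sum (a + k)%N = partial_sum a + k%:R *: w.
Proof.
move=> Vw; rewrite /partial_sum (big_cat_nat _ (n := a.+1)) //= ?ltnS ?leq_addr //.
congr (_ + _); rewrite (eq_big_nat _ _ (F2 := fun=> w)) => [|r /Vw //].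
by rewrite sumr_const_nat subSS addKn scaler_nat.
Qed.

Lemma cusum0 : cusum 0 = 0.
Proof. by rewrite /cusum /partial_sum big_geq // mul0r scale0r subrr. Qed.

Lemma cusumT : (0 < T)%N -> cusum T = 0.
Proof. by move=> T0; rewrite /cusum divff ?pnatr_eq0 -?lt0n // scale1r subrr. Qed.

Lemma Vtilde_cusum t : (0 < t < T)%N ->
  Vtilde T V t = Num.sqrt (T%:R / (t%:R * (T%:R - t%:R))) *: cusum t.
Proof.
rewrite /Vtilde => /andP[t0 tT].
have tR : 0 < t%:R :> R by rewrite ltr0n.
have TtR : 0 < T%:R - t%:R :> R by rewrite subr_gt0 ltr_nat.
have TR : 0 < T%:R :> R by rewrite ltr0n (ltn_trans t0).
have coef_ge0 : 0 <= T%:R / (t%:R * (T%:R - t%:R)) :> R.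
  by rewrite ltW // divr_gt0 ?mulr_gt0.
have -> : (T%:R - t%:R) / (T%:R * t%:R)
          = T%:R / (t%:R * (T%:R - t%:R)) * ((T%:R - t%:R) / T%:R) ^+ 2 :> R.
  by field; rewrite !gt_eqF.
have -> : t%:R / (T%:R * (T%:R - t%:R))
          = T%:R / (t%:R * (T%:R - t%:R)) * (t%:R / T%:R) ^+ 2 :> R.
  by field; rewrite !gt_eqF.
rewrite !sqrtr_mul_sqr // ?divr_ge0 ?ltW // -!scalerA -scalerBr /cusum; congr (_ *: _).
have -> : \sum_(t.+1 <= r < T.+1) V r = partial_sum T - partial_sum t.
  by rewrite /partial_sum (big_cat_nat _ (m := 1) (n := t.+1)) 1?ltnW //= addrC addrK.
by apply/rowP => i; rewrite !mxE; field; rewrite gt_eqF.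
Qed.

Lemma sqnorm_cusum_le (K : R) t : 0 <= K ->
  (forall s, (0 < s < T)%N -> sqnorm (Vtilde T V s) <= K) ->
  (t <= T)%N -> sqnorm (cusum t) <= T%:R / 4 * K.
Proof.
move=> K0 VK tT; have TK_ge0 : 0 <= T%:R / 4 * K by rewrite mulr_ge0 ?divr_ge0.
have [-> | t0] := posnP t; first by rewrite cusum0 sqnorm0.
move: tT t0; rewrite leq_eqVlt => /orP[/eqP-> T0 | tT t0].
  by rewrite cusumT ?sqnorm0.
have tR : 0 < t%:R :> R by rewrite ltr0n.
have TtR : 0 < T%:R - t%:R :> R by rewrite subr_gt0 ltr_nat.
have TR : 0 < T%:R :> R by rewrite ltr0n (ltn_trans t0).
have coef_ge0 : 0 <= T%:R / (t%:R * (T%:R - t%:R)) :> R.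
  by rewrite ltW // divr_gt0 ?mulr_gt0.
have := VK t; rewrite t0 tT => /(_ isT).
rewrite Vtilde_cusum ?t0 // sqnormZ sqr_sqrtr // => VK_t.
have amgm : t%:R * (T%:R - t%:R) / T%:R <= T%:R / 4 :> R.
  rewrite ler_pdivrMr // mulrAC ler_pdivlMr //.
  by have := sqr_ge0 (T%:R - 2 * t%:R : R); nra.
have -> : sqnorm (cusum t) = t%:R * (T%:R - t%:R) / T%:R *
            (T%:R / (t%:R * (T%:R - t%:R)) * sqnorm (cusum t)).
  by field; rewrite !gt_eqF.
apply: le_trans (ler_wpM2r K0 amgm); apply: ler_wpM2l VK_t.
by rewrite ltW // divr_gt0 ?mulr_gt0.
Qed.

Lemma cusum_second_difference n d w1 w2 : (d <= n)%N ->
  (forall r, (n - d < r <= n)%N -> V r = w1) ->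
  (forall r, (n < r <= n + d)%N -> V r = w2) ->
  d%:R *: (w1 - w2) = (cusum n - cusum (n - d)%N) + (cusum n - cusum (n + d)%N).
Proof.
move=> dn Vw1 Vw2.
have Sn : partial_sum n = partial_sum (n - d)%N + d%:R *: w1.
  by rewrite -{1}(subnK dn); apply: partial_sum_const; rewrite subnK.
rewrite /cusum (partial_sum_const Vw2) Sn natrD natrB //.
move: (partial_sum (n - d)%N) (partial_sum T) => X Y.
by apply/rowP => i; rewrite !mxE; ring.
Qed.

Lemma sqnorm_jump_le (K : R) n d w1 w2 : 0 <= K ->
  (forall s, (0 < s < T)%N -> sqnorm (Vtilde T V s) <= K) ->
  (d <= n)%N -> (n + d <= T)%N ->
  (forall r, (n - d < r <= n)%N -> V r = w1) ->
  (forall r, (n < r <= n + d)%N -> V r = w2) ->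
  d%:R ^+ 2 * sqnorm (w1 - w2) <= 4 * T%:R * K.
Proof.
move=> K0 VK dn ndT Vw1 Vw2.
have cusum_le t := @sqnorm_cusum_le K t K0 VK.
rewrite -sqnormZ (cusum_second_difference dn Vw1 Vw2).
apply: le_trans (sqnormD_le _ _) _.
have := sqnormB_le (cusum n) (cusum (n - d)%N).
have := sqnormB_le (cusum n) (cusum (n + d)%N).
have := cusum_le n (leq_trans (leq_addr d n) ndT).
have := cusum_le (n - d)%N (leq_trans (leq_subr d n) (leq_trans (leq_addr d n) ndT)).
have := cusum_le (n + d)%N ndT.
have -> : 4 * T%:R * K = 16 * (T%:R / 4 * K) by field.
lra.
Qed.

End CenteredPartialSums.

Theorem lemma15 (R : realType) (p T M : nat) (V : nat -> 'rV[R]_p)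
  (nu : nat -> nat) (Delta m : nat) :
  nu 0%N = 0%N -> nu M = T ->
  (forall k, (k < M)%N -> (nu k < nu k.+1)%N) ->
  (forall k t, (k < M)%N -> (nu k < t)%N -> (t <= nu k.+1)%N -> V t = V (nu k).+1) ->
  (0 < Delta)%N ->
  (1 <= m)%N -> (m <= M - 1)%N ->
  (forall m', (m' <= M)%N -> m' <> m ->
     Delta%:R <= `|(nu m)%:R - (nu m')%:R| :> R) ->
  \big[Num.max/0]_(1 <= t < T) sqnorm (Vtilde T V t)
    >= sqnorm (V (nu m) - V (nu m).+1) * (Delta%:R ^+ 2) / (48 * T%:R).
Proof.
move=> _ nuM nu_incr V_const _ m1 mM gapD.
have mM' : (m < M)%N by lia.
have [k mk] : exists k, m = k.+1 by exists m.-1; lia.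
set n := nu m.
have nu_k_n : (nu k <= n)%N by rewrite /n mk ltnW // nu_incr // -mk ltnW.
have n_nu_m1 : (n <= nu m.+1)%N by rewrite ltnW // nu_incr.
have gap_left : (Delta <= n - nu k)%N.
  by apply: (leq_dist_subn (R := R)) (gapD k _ _) => //; lia.
have gap_right : (Delta <= nu m.+1 - n)%N.
  by apply: (leq_dist_subn (R := R)); rewrite // distrC gapD //; lia.
have nuT : (nu m.+1 <= T)%N by rewrite -nuM leq_incr_last.
set Mx := \big[Num.max/0]_(1 <= t < T) sqnorm (Vtilde T V t).
have Mx_ge0 : 0 <= Mx := bigmax_ge_id _ _ _ _.
have Vtilde_le_Mx s : (0 < s < T)%N -> sqnorm (Vtilde T V s) <= Mx.
  move=> sT; apply: (le_bigmax_seq _ _ xpredT (fun t => sqnorm (Vtilde T V t))) => //.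
  by rewrite mem_index_iota.
have T0 : (0 < T)%N by have := nu_incr m mM'; lia.
have jump : Delta%:R ^+ 2 * sqnorm (V n - V n.+1) <= 4 * T%:R * Mx.
  apply: (sqnorm_jump_le (n := n)) Mx_ge0 Vtilde_le_Mx _ _ _ _; [lia | lia | |].
  - move=> r /andP[r_gt r_le].
    by rewrite (V_const k r) 1?(V_const k n) -?mk //; lia.
  - by move=> r /andP[r_gt r_le]; apply: V_const => //; lia.
have TR : 0 < T%:R :> R by rewrite ltr0n.
rewrite ler_pdivrMr ?mulr_gt0 //.
by have := mulr_ge0 (ltW TR) Mx_ge0; nra.
Qed.
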